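(* Let $\phi=\frac{1+\sqrt5}{2}$, let $\Gamma\subset SL_2(\mathbb R)$ be the group generated by $$\sigma_0=\begin{pmatrix}1&\phi\\0&1\end{pmatrix},\quad \sigma_1=\begin{pmatrix}\phi&\phi\\1&\phi\end{pmatrix},\quad \sigma_2=\begin{pmatrix}\phi&1\\\phi&\phi\end{pmatrix},\quad \sigma_3=\begin{pmatrix}1&0\\\phi&1\end{pmatrix},$$ and let $S=\{\gamma\binom{1}{0}:\gamma\in\Gamma\}$. Let $v_1,v_2\in S$ be distinct, write $v_1-v_2=\binom{x}{y}$, and let $\lambda=\gcd_{\Gamma^+}(x,y)$. Then there are two points of $S$ lying on a common horizontal line at distance exactly $\lambda$ from each other.
   Context: $S\subset\mathbb Z[\phi]^2$. For $x,y\in\mathbb Z[\phi]$ not both zero, $\gcd_{\Gamma^+}(x,y)$ denotes the positive real number $\lambda$ such that $\lambda^{-1}\binom{|x|}{|y|}\in S$ (it is known, from the Davis–Lelièvre gcd algorithm for $\mathbb Z[\phi]$, that such $\lambda$ exists and is unique; it is the representative of the gcd of $|x|,|y|$ produced by that algorithm). $\Gamma$ acts on $\mathbb R^2$ by matrix multiplication on column vectors. *)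

From Stdlib Require Import Reals.
Open Scope R_scope.

Definition phi : R := (1 + sqrt 5) / 2.

Record mat2 := Mat2 { m11 : R; m12 : R; m21 : R; m22 : R }.

Definition mmul (A B : mat2) : mat2 :=
  Mat2 (m11 A * m11 B + m12 A * m21 B) (m11 A * m12 B + m12 A * m22 B)
       (m21 A * m11 B + m22 A * m21 B) (m21 A * m12 B + m22 A * m22 B).

Definition mapply (A : mat2) (v : R * R) : R * R :=
  (m11 A * fst v + m12 A * snd v, m21 A * fst v + m22 A * snd v).

Definition mid : mat2 := Mat2 1 0 0 1.

(* inverse of a determinant-one matrix *)
Definition minv (A : mat2) : mat2 := Mat2 (m22 A) (- m12 A) (- m21 A) (m11 A).

Definition sigma0 : mat2 := Mat2 1 phi 0 1.
Definition sigma1 : mat2 := Mat2 phi phi 1 phi.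
Definition sigma2 : mat2 := Mat2 phi 1 phi phi.
Definition sigma3 : mat2 := Mat2 1 0 phi 1.

Definition is_generator (s : mat2) : Prop :=
  s = sigma0 \/ s = sigma1 \/ s = sigma2 \/ s = sigma3.

Inductive Gamma : mat2 -> Prop :=
  | Gamma_id : Gamma mid
  | Gamma_gen : forall s g, is_generator s -> Gamma g -> Gamma (mmul s g)
  | Gamma_geninv : forall s g, is_generator s -> Gamma g -> Gamma (mmul (minv s) g).

Definition S (v : R * R) : Prop := exists g, Gamma g /\ v = mapply g (1, 0).

(* lam is gcd_{Gamma^+}(x,y): the positive real with lam^{-1}(|x|,|y|) in S. *)
Definition is_gcdGamma (x y lam : R) : Prop :=
  0 < lam /\ S (Rabs x / lam, Rabs y / lam).

(* If g in Gamma sends (1,0) to (|x|,|y|)/lam, then g or its conjugate by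
   diag(1,-1) -- which again lies in Gamma, since this conjugation inverts
   every generator -- sends (+-lam, 0) to v1 - v2.  The inverse of that matrix
   maps v1 and v2 to two points of S whose difference is (+-lam, 0). *)
From Stdlib Require Import Reals Lra.
Open Scope R_scope.

Lemma phi_sq : phi * phi = phi + 1.
Proof.
  unfold phi. assert (H5 := sqrt_sqrt 5 ltac:(lra)). lra.
Qed.

Lemma mat2_eq a b c d a' b' c' d' :
  a = a' -> b = b' -> c = c' -> d = d' -> Mat2 a b c d = Mat2 a' b' c' d'.
Proof. intros; subst; reflexivity. Qed.

Ltac mat2_ring := repeat match goal with A : mat2 |- _ => destruct A end;
  unfold mmul, minv, mid; simpl; apply mat2_eq; ring.

Lemma mmulA A B C : mmul A (mmul B C) = mmul (mmul A B) C.
Proof. mat2_ring. Qed.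

Lemma mmul1m A : mmul mid A = A.
Proof. mat2_ring. Qed.

Lemma mmulm1 A : mmul A mid = A.
Proof. mat2_ring. Qed.

Lemma minv_mmul A B : minv (mmul A B) = mmul (minv B) (minv A).
Proof. mat2_ring. Qed.

Lemma minvK A : minv (minv A) = A.
Proof. mat2_ring. Qed.

Lemma minv_mid : minv mid = mid.
Proof. mat2_ring. Qed.

Definition mdet (A : mat2) : R := m11 A * m22 A - m12 A * m21 A.

Lemma mdet_mmul A B : mdet (mmul A B) = mdet A * mdet B.
Proof. destruct A, B; unfold mdet, mmul; simpl; ring. Qed.

Lemma mdet_minv A : mdet (minv A) = mdet A.
Proof. destruct A; unfold mdet, minv; simpl; ring. Qed.

Lemma mdet_generator s : is_generator s -> mdet s = 1.
Proof.
  pose proof phi_sq.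
  intros [-> | [-> | [-> | ->]]]; unfold mdet; simpl; lra.
Qed.

Lemma mapply_mmul A B v : mapply (mmul A B) v = mapply A (mapply B v).
Proof. destruct A, B, v; unfold mapply, mmul; simpl; f_equal; ring. Qed.

Lemma Gamma_generator s : is_generator s -> Gamma s.
Proof. intros Hs; rewrite <- (mmulm1 s); apply Gamma_gen; [exact Hs | constructor]. Qed.

Lemma Gamma_minv_generator s : is_generator s -> Gamma (minv s).
Proof.
  intros Hs; rewrite <- (mmulm1 (minv s)); apply Gamma_geninv; [exact Hs | constructor].
Qed.

Lemma Gamma_mmul A B : Gamma A -> Gamma B -> Gamma (mmul A B).
Proof.
  intros HA HB; induction HA.
  - rewrite mmul1m; exact HB.
  - rewrite <- mmulA; apply Gamma_gen; assumption.
  - rewrite <- mmulA; apply Gamma_geninv; assumption.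
Qed.

Lemma Gamma_minv A : Gamma A -> Gamma (minv A).
Proof.
  intros HA; induction HA.
  - rewrite minv_mid; constructor.
  - rewrite minv_mmul; apply Gamma_mmul; [assumption | apply Gamma_minv_generator; assumption].
  - rewrite minv_mmul, minvK; apply Gamma_mmul; [assumption | apply Gamma_generator; assumption].
Qed.

Lemma Gamma_mdet A : Gamma A -> mdet A = 1.
Proof.
  intros HA; induction HA; rewrite ?mdet_mmul, ?mdet_minv, ?mdet_generator by assumption.
  - unfold mdet, mid; simpl; ring.
  - rewrite IHHA; ring.
  - rewrite IHHA; ring.
Qed.

Lemma S_mapply A v : Gamma A -> S v -> S (mapply A v).
Proof.
  intros HA [g [Hg ->]]. exists (mmul A g); split.
  - apply Gamma_mmul; assumption.
  - symmetry; apply mapply_mmul.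
Qed.

(* Conjugation by diag(1,-1). *)
Definition mreflect (A : mat2) : mat2 := Mat2 (m11 A) (- m12 A) (- m21 A) (m22 A).

Lemma mreflect_mmul A B : mreflect (mmul A B) = mmul (mreflect A) (mreflect B).
Proof. unfold mreflect; mat2_ring. Qed.

Lemma mreflect_minv A : mreflect (minv A) = minv (mreflect A).
Proof. unfold mreflect; mat2_ring. Qed.

Lemma mreflect_generator s : is_generator s -> mreflect s = minv s.
Proof. intros [-> | [-> | [-> | ->]]]; unfold mreflect; mat2_ring. Qed.

Lemma mreflect_mid : mreflect mid = mid.
Proof. unfold mreflect; mat2_ring. Qed.

Lemma Gamma_mreflect A : Gamma A -> Gamma (mreflect A).
Proof.
  intros HA; induction HA; rewrite ?mreflect_mmul.
  - rewrite mreflect_mid; constructor.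
  - rewrite mreflect_generator by assumption; apply Gamma_geninv; assumption.
  - rewrite mreflect_minv, mreflect_generator, minvK by assumption.
    apply Gamma_gen; assumption.
Qed.

Lemma Gamma_column_signs g e1 e2 t :
  Gamma g -> (e1 = 1 \/ e1 = -1) -> (e2 = 1 \/ e2 = -1) ->
  exists h, Gamma h /\ mapply h (e1 * t, 0) = (e1 * t * m11 g, e2 * t * m21 g).
Proof.
  intros Hg He1 He2.
  assert (He : e2 = e1 \/ e2 = - e1) by lra.
  destruct He as [-> | ->].
  - exists g; split; [assumption|].
    destruct g; unfold mapply; simpl; f_equal; ring.
  - exists (mreflect g); split; [apply Gamma_mreflect; assumption|].
    destruct g; unfold mapply, mreflect; simpl; f_equal; ring.
Qed.

Lemma S_pair_of_difference h t v1 v2 :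
  Gamma h -> S v1 -> S v2 ->
  mapply h (t, 0) = (fst v1 - fst v2, snd v1 - snd v2) ->
  exists p q, S p /\ S q /\ snd p = snd q /\ fst p - fst q = t.
Proof.
  intros Hh S1 S2 Ev.
  pose proof (Gamma_mdet h Hh) as Hdet.
  exists (mapply (minv h) v1), (mapply (minv h) v2).
  split; [apply S_mapply; [apply Gamma_minv|]; assumption|].
  split; [apply S_mapply; [apply Gamma_minv|]; assumption|].
  destruct h as [a b c d], v1 as [x1 y1], v2 as [x2 y2].
  unfold mdet in Hdet; unfold mapply, minv in *; simpl in *.
  injection Ev as Ex Ey.
  replace x1 with (x2 + a * t) by lra.
  replace y1 with (y2 + c * t) by lra.
  split; [ring|].
  replace (d * (x2 + a * t) + - b * (y2 + c * t) - (d * x2 + - b * y2))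
    with ((a * d - b * c) * t) by ring.
  rewrite Hdet; ring.
Qed.

Lemma Rabs_sign x : exists e, (e = 1 \/ e = -1) /\ x = e * Rabs x.
Proof.
  destruct (Rle_dec 0 x).
  - exists 1; split; [now left|]. rewrite Rabs_right by lra; ring.
  - exists (-1); split; [now right|]. rewrite Rabs_left by lra; ring.
Qed.

Theorem lemma3p3 :
  forall v1 v2 : R * R, S v1 -> S v2 -> v1 <> v2 ->
  forall lam : R, is_gcdGamma (fst v1 - fst v2) (snd v1 - snd v2) lam ->
  exists p q : R * R, S p /\ S q /\ snd p = snd q /\ Rabs (fst p - fst q) = lam.
Proof.
  intros v1 v2 S1 S2 _ lam [Hlam [g [Hg Eg]]].
  set (x := fst v1 - fst v2) in Eg; set (y := snd v1 - snd v2) in Eg.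
  assert (Hcol : m11 g = Rabs x / lam /\ m21 g = Rabs y / lam).
  { destruct g; unfold mapply in Eg; simpl in *; injection Eg as E1 E2; lra. }
  destruct (Rabs_sign x) as [e1 [He1 Ex]], (Rabs_sign y) as [e2 [He2 Ey]].
  destruct (Gamma_column_signs g e1 e2 lam Hg He1 He2) as [h [Hh Eh]].
  destruct (S_pair_of_difference h (e1 * lam) v1 v2 Hh S1 S2) as [p [q [Sp [Sq [Ep Eq]]]]].
  { rewrite Eh, (proj1 Hcol), (proj2 Hcol); fold x y; f_equal.
    - rewrite Ex at 2; field; lra.
    - rewrite Ey at 2; field; lra. }
  exists p, q; repeat split; try assumption.
  rewrite Eq, Rabs_mult, (Rabs_right lam) by lra.
  destruct He1 as [-> | ->]; [rewrite Rabs_R1 | rewrite Rabs_left by lra]; ring.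
Qed.
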